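(* Let $S$ be a finite semigroup with an anti-involution $*$, let $R$ be a commutative ring with $1$, and let $\alpha$ be a twisting from $S$ into $R$ with $\alpha(x,y)=\alpha(y^*,x^* )$ for all $x,y\in S$. Suppose that for each $\mathcal D$-class $D$ there is an idempotent $1_D\in D$ with $1_D^*=1_D$; let $G_D$ be the $\mathcal H$-class of $1_D$. Suppose that $\alpha(x,y)=\alpha(x,z)$ for all $x,y,z\in S$ with $y\,\mathcal R\,z$. Suppose that for each $D$ the (untwisted) group algebra $R[G_D]$ is cellular with cell datum $(\Lambda_D,M_D,C,* )$, where $*$ is the linear extension of $*|_{G_D}$, and write $C^\lambda_{st}=\sum_{g\in G_D}c^\lambda_{st}(g)g$. Let $\mathcal D$ be the set of $\mathcal D$-classes, $\mathcal L_D$ the set of $\mathcal L$-classes in $D$, $\Lambda=\{(D,\lambda)\mid D\in\mathcal D,\lambda\in\Lambda_D\}$ ordered by $(D_1,\lambda_1)\le(D_2,\lambda_2)$ iff $D_1<_{\mathcal D}D_2$ or ($D_1=D_2$ and $\lambda_1\le\lambda_2$ in $\Lambda_{D_1}$), $M(D,\lambda)=\mathcal L_D\times M_D(\lambda)$, choose for each $L\in\mathcal L_D$ an element $u_L\in L$ with $u_L\,\mathcal R\,1_D$, and set \[C^{(D,\lambda)}_{(L,s)(K,t)}=\sum_{g\in G_D}c^\lambda_{st}(g)\,(u_L^*gu_K)\in R^\alpha[S].\] Then $R^\alpha[S]$ is cellular with cell datum $(\Lambda,M,C,* )$, where $*$ is the linear extension of $*$ to $R^\alpha[S]$.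
   Context: Green's relations on a semigroup $S$ ($S^1$ = $S$ with identity adjoined): $x\le_{\mathcal R}y$ iff $x\in yS^1$; $x\le_{\mathcal L}y$ iff $x\in S^1y$; $x\le_{\mathcal J}y$ iff $x\in S^1yS^1$; $\mathcal R,\mathcal L,\mathcal J$ the associated equivalences; $\mathcal H=\mathcal R\cap\mathcal L$; $\mathcal D$ generated by $\mathcal R\cup\mathcal L$. For finite $S$, $\mathcal D=\mathcal J$ and $\le_{\mathcal J}$ induces a partial order $\le_{\mathcal D}$ on $\mathcal D$-classes; $<_{\mathcal D}$ is its strict version. An anti-involution of $S$: $(x^* )^*=x$, $(xy)^*=y^*x^*$. A twisting $\alpha:S\times S\to R$ satisfies $\alpha(x,y)\alpha(xy,z)=\alpha(x,yz)\alpha(y,z)$; $R^\alpha[S]$ is the free $R$-module on $S$ with product $x\cdot y=\alpha(x,y)(xy)$. An anti-involution of an $R$-algebra is $R$-linear with $(a^* )^*=a$, $(ab)^*=b^*a^*$. Cellular algebra with cell datum $(\Lambda,M,C,* )$: (C1) $\Lambda$ finite poset, finite sets $M(\lambda)$, and $\{C^\lambda_{st}\}$ an $R$-basis; (C2) $*$ anti-involution with $(C^\lambda_{st})^*=C^\lambda_{ts}$; (C3) for all $\lambda,s,a$ there are $r_a(s',s)\in R$ with $aC^\lambda_{st}\in\sum_{s'}r_a(s',s)C^\lambda_{s't}+A(<\lambda)$ for all $t$, where $A(<\lambda)$ is the span of the $C^\mu_{s''t''}$ with $\mu<\lambda$. *)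

From HB Require Import structures.
From mathcomp Require Import all_boot all_order all_algebra.
Set Implicit Arguments. Unset Strict Implicit. Unset Printing Implicit Defensive.
Import GRing.Theory.
Local Open Scope ring_scope.

(* An element a : {ffun T -> R} is the formal combination sum_x a x x. *)
Section Alg.
Variables (R : comPzRingType) (T : finType).

Definition tw_mul (mr : T -> T -> T -> bool) (tw : T -> T -> R)
  (a b : {ffun T -> R}) : {ffun T -> R} :=
  [ffun z => \sum_(x : T) \sum_(y : T | mr x y z) tw x y * a x * b y].

Definition st_ext (sr : T -> T -> bool) (a : {ffun T -> R}) : {ffun T -> R} :=
  [ffun z => \sum_(x : T | sr x z) a x].

Definition fscale (k : R) (a : {ffun T -> R}) : {ffun T -> R} :=
  [ffun z => k * a z].

Definition delta (x : T) : {ffun T -> R} := [ffun z => (z == x)%:R].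

Definition cellular (mul : {ffun T -> R} -> {ffun T -> R} -> {ffun T -> R})
  (star : {ffun T -> R} -> {ffun T -> R})
  (Lam : finType) (le : rel Lam) (M : Lam -> finType)
  (C : forall l : Lam, M l -> M l -> {ffun T -> R}) : Prop :=
  let lc (P : pred Lam) (coef : forall l : Lam, M l -> M l -> R) : {ffun T -> R} :=
    [ffun z => \sum_(l : Lam | P l) \sum_(s : M l) \sum_(t : M l) coef l s t * C l s t z] in
  [/\ (forall l, le l l),
      (forall l m, le l m -> le m l -> l = m) &
      (forall l m n, le l m -> le m n -> le l n)] /\
      (forall coef : forall l : Lam, M l -> M l -> R,
          lc predT coef = 0 -> forall l s t, coef l s t = 0) /\
      (forall v : {ffun T -> R}, exists coef, v = lc predT coef) /\
      [/\ (forall a b, star (a + b) = star a + star b),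
          (forall k a, star (fscale k a) = fscale k (star a)),
          (forall a, star (star a) = a),
          (forall a b, star (mul a b) = mul (star b) (star a)) &
          (forall l s t, star (C l s t) = C l t s)] /\
      (forall (l : Lam) (s : M l) (a : {ffun T -> R}),
         exists r : M l -> R, forall t : M l,
           exists coef : forall m : Lam, M m -> M m -> R,
             mul a (C l s t) =
               [ffun z => \sum_(s' : M l) r s' * C l s' t z]
               + lc (fun m => le m l && (m != l)) coef).

End Alg.

Section Green.
Variables (S : finType) (mul : S -> S -> S).

(* x <=_R y iff x \in y S^1, etc. *)
Definition leRg (x y : S) : bool := (x == y) || [exists s, x == mul y s].
Definition leLg (x y : S) : bool := (x == y) || [exists s, x == mul s y].
Definition leJg (x y : S) : bool :=
  [|| x == y, [exists s, x == mul s y], [exists t, x == mul y t]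
    | [exists s, exists t, x == mul (mul s y) t]].

Definition Rg (x y : S) : bool := leRg x y && leRg y x.
Definition Lg (x y : S) : bool := leLg x y && leLg y x.
Definition Hg (x y : S) : bool := Rg x y && Lg x y.
Definition Dg (x y : S) : bool := connect (fun a b => Rg a b || Lg a b) x y.

Definition Dclass (x : S) : {set S} := [set y | Dg x y].
Definition Lclass (x : S) : {set S} := [set y | Lg x y].
Definition Hclass (x : S) : {set S} := [set y | Hg x y].
Definition Dclasses : {set {set S}} := [set Dclass x | x : S].
Definition Lclasses_in (D : {set S}) : {set {set S}} := [set Lclass x | x in D].

Definition leD (D1 D2 : {set S}) : bool :=
  [exists x in D1, exists y in D2, leJg x y].
Definition ltD (D1 D2 : {set S}) : bool := (D1 != D2) && leD D1 D2.

Definition DCl : finType := {D : {set S} | D \in Dclasses}.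
Definition LCl (D : {set S}) : finType := {L : {set S} | L \in Lclasses_in D}.

End Green.

Section Cor.
Variables (S : finType) (mul : S -> S -> S) (star : S -> S).
Variable (one : {set S} -> S).

Definition GD (D : {set S}) : {set S} := Hclass mul (one D).
Definition GT (D : {set S}) : finType := {g : S | g \in GD D}.

Variable (R : comPzRingType).

Definition gmul (D : {set S}) := @tw_mul R (GT D)
  (fun x y z => mul (val x) (val y) == val z) (fun _ _ => 1).
Definition gstar (D : {set S}) := @st_ext R (GT D)
  (fun x z => star (val x) == val z).

Definition smul (alpha : S -> S -> R) := @tw_mul R S (fun x y z => mul x y == z) alpha.
Definition sstar := @st_ext R S (fun x z => star x == z).

Variables (Lam : {set S} -> finType) (leLam : forall D, rel (Lam D))
  (M : forall D, Lam D -> finType).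

Definition BigLam : finType := {D : DCl mul & Lam (val D)}.

Definition leBig (p q : BigLam) : bool :=
  ltD mul (val (tag p)) (val (tag q))
  || ((tag p == tag q) && leLam (tagged p) (tagged_as p q)).

Definition BigM (p : BigLam) : finType :=
  (LCl mul (val (tag p)) * M (tagged p))%type.

Variables (c : forall D (l : Lam D), M l -> M l -> {ffun GT D -> R})
  (u : {set S} -> S).

Definition BigC (p : BigLam) (x y : BigM p) : {ffun S -> R} :=
  \sum_(g : GT (val (tag p)))
     fscale (c x.2 y.2 g) (delta R (mul (mul (star (u (val x.1))) (val g)) (u (val y.1)))).

End Cor.

Arguments tw_mul : clear implicits.
Arguments st_ext : clear implicits.
Arguments fscale : clear implicits.
Arguments delta : clear implicits.
Arguments cellular : clear implicits.
Arguments GD : clear implicits.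
Arguments GT : clear implicits.
Arguments gmul : clear implicits.
Arguments gstar : clear implicits.
Arguments smul : clear implicits.
Arguments sstar : clear implicits.
Arguments BigLam : clear implicits.
Arguments leBig : clear implicits.
Arguments BigM : clear implicits.
Arguments BigC : clear implicits.

(* Write e = 1_D and G = G_D.  In a finite semigroup, x <=_J y together with y <=_J x forces
   x D y (stability, via idempotent powers), so the D-classes are partially ordered and
   (L, g, K) |-> u_L^* g u_K is a bijection from L_D * G * L_D onto D (Green's lemma, with the
   inverse x |-> t_L^* x t_K for right inverses u_L t_L = e).  Hence R^alpha[S] is the direct
   sum over D and (L, K) of copies f |-> u_L^* f u_K of R[G], the proposed basis is the image
   of the cellular bases of the R[G], and freeness, spanning and (C2) follow blockwise.
   For (C3) with a = x: if x u_L^* falls below D, so does every x u_L^* g u_K; otherwise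
   x u_L^* = u_L'^* h with h in G, so x (u_L^* g u_K) = u_L'^* (h g) u_K, the twisting
   alpha(x, u_L^* g u_K) = alpha(x, u_L^* ) is constant on the R-class of u_L^*, and (C3)
   for h C^l_st in R[G] transports to R^alpha[S]. *)

From HB Require Import structures.
From mathcomp Require Import all_boot all_order all_algebra.
From mathcomp Require Import zify.
Import GRing.Theory.

Set Implicit Arguments. Unset Strict Implicit. Unset Printing Implicit Defensive.

Section Green.
Variables (S : finType) (mul : S -> S -> S).
Hypothesis mulA : associative mul.

(* [None] plays the role of the identity adjoined in S^1. *)
Definition lmul1 (p : option S) y := if p is Some s then mul s y else y.
Definition rmul1 y (q : option S) := if q is Some s then mul y s else y.

Lemma leRgP x y : reflect (exists q, x = rmul1 y q) (leRg mul x y).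
Proof.
apply: (iffP orP) => [[/eqP->|/existsP[s /eqP->]]|[[s|] ->]].
- by exists None.
- by exists (Some s).
- by right; apply/existsP; exists s.
- by left.
Qed.

Lemma leLgP x y : reflect (exists p, x = lmul1 p y) (leLg mul x y).
Proof.
apply: (iffP orP) => [[/eqP->|/existsP[s /eqP->]]|[[s|] ->]].
- by exists None.
- by exists (Some s).
- by right; apply/existsP; exists s.
- by left.
Qed.

Lemma leJgP x y : reflect (exists p q, x = rmul1 (lmul1 p y) q) (leJg mul x y).
Proof.
apply: (iffP or4P).
  case=> [/eqP->|/existsP[s /eqP->]|/existsP[t /eqP->]|/existsP[s /existsP[t /eqP->]]].
  - by exists None, None.
  - by exists (Some s), None.
  - by exists None, (Some t).
  - by exists (Some s), (Some t).
move=> [[s|] [[t|] ->]] /=.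
- by constructor 4; apply/existsP; exists s; apply/existsP; exists t.
- by constructor 2; apply/existsP; exists s.
- by constructor 3; apply/existsP; exists t.
- by constructor 1.
Qed.

Lemma lmul1_mul p x y : lmul1 p (mul x y) = mul (lmul1 p x) y.
Proof. by case: p => //= s; rewrite mulA. Qed.

Lemma rmul1_mul x y q : rmul1 (mul x y) q = mul x (rmul1 y q).
Proof. by case: q => //= s; rewrite mulA. Qed.

Lemma lmul1_rmul1 p y q : lmul1 p (rmul1 y q) = rmul1 (lmul1 p y) q.
Proof. by case: p => [s|]; case: q => [t|] //=; rewrite mulA. Qed.

Lemma lmul1_comp p p' y : exists p'', lmul1 p (lmul1 p' y) = lmul1 p'' y.
Proof.
case: p => [s|]; case: p' => [s'|] /=; last by exists None.
- by exists (Some (mul s s')); rewrite mulA.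
- by exists (Some s).
- by exists (Some s').
Qed.

Lemma rmul1_comp y q q' : exists q'', rmul1 (rmul1 y q') q = rmul1 y q''.
Proof.
case: q => [s|]; case: q' => [s'|] /=; last by exists None.
- by exists (Some (mul s' s)); rewrite -mulA.
- by exists (Some s).
- by exists (Some s').
Qed.

Lemma leRg_refl x : leRg mul x x. Proof. by rewrite /leRg eqxx. Qed.
Lemma leLg_refl x : leLg mul x x. Proof. by rewrite /leLg eqxx. Qed.

Lemma leRg_trans y x z : leRg mul x y -> leRg mul y z -> leRg mul x z.
Proof.
move=> /leRgP[q ->] /leRgP[q' ->]; have [q'' ->] := rmul1_comp z q q'.
by apply/leRgP; exists q''.
Qed.

Lemma leLg_trans y x z : leLg mul x y -> leLg mul y z -> leLg mul x z.
Proof.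
move=> /leLgP[p ->] /leLgP[p' ->]; have [p'' ->] := lmul1_comp p p' z.
by apply/leLgP; exists p''.
Qed.

Lemma leJg_trans y x z : leJg mul x y -> leJg mul y z -> leJg mul x z.
Proof.
move=> /leJgP[p [q ->]] /leJgP[p' [q' ->]].
rewrite lmul1_rmul1; have [q'' ->] := rmul1_comp (lmul1 p (lmul1 p' z)) q q'.
have [p'' ->] := lmul1_comp p p' z.
by apply/leJgP; exists p'', q''.
Qed.

Lemma leRg_leJg x y : leRg mul x y -> leJg mul x y.
Proof. by move=> /leRgP[q ->]; apply/leJgP; exists None, q. Qed.

Lemma leLg_leJg x y : leLg mul x y -> leJg mul x y.
Proof. by move=> /leLgP[p ->]; apply/leJgP; exists p, None. Qed.

Lemma leRg_mulr x s : leRg mul (mul x s) x.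
Proof. by apply/leRgP; exists (Some s). Qed.

Lemma leLg_mull x s : leLg mul (mul s x) x.
Proof. by apply/leLgP; exists (Some s). Qed.

Lemma leRg_mul2l z x y : leRg mul x y -> leRg mul (mul z x) (mul z y).
Proof. by move=> /leRgP[q ->]; apply/leRgP; exists q; rewrite rmul1_mul. Qed.

Lemma leLg_mul2r z x y : leLg mul x y -> leLg mul (mul x z) (mul y z).
Proof. by move=> /leLgP[p ->]; apply/leLgP; exists p; rewrite lmul1_mul. Qed.

Lemma Rg_refl x : Rg mul x x. Proof. by rewrite /Rg leRg_refl. Qed.
Lemma Lg_refl x : Lg mul x x. Proof. by rewrite /Lg leLg_refl. Qed.
Lemma Rg_sym x y : Rg mul x y = Rg mul y x. Proof. by rewrite /Rg andbC. Qed.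
Lemma Lg_sym x y : Lg mul x y = Lg mul y x. Proof. by rewrite /Lg andbC. Qed.

Lemma Rg_trans y x z : Rg mul x y -> Rg mul y z -> Rg mul x z.
Proof.
by move=> /andP[xy yx] /andP[yz zy]; rewrite /Rg (leRg_trans xy) ?(leRg_trans zy).
Qed.

Lemma Lg_trans y x z : Lg mul x y -> Lg mul y z -> Lg mul x z.
Proof.
by move=> /andP[xy yx] /andP[yz zy]; rewrite /Lg (leLg_trans xy) ?(leLg_trans zy).
Qed.

Lemma Rg_mul2l z x y : Rg mul x y -> Rg mul (mul z x) (mul z y).
Proof. by move=> /andP[xy yx]; rewrite /Rg !leRg_mul2l. Qed.

Lemma Lg_mul2r z x y : Lg mul x y -> Lg mul (mul x z) (mul y z).
Proof. by move=> /andP[xy yx]; rewrite /Lg !leLg_mul2r. Qed.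

Lemma Dg_refl x : Dg mul x x. Proof. exact: connect0. Qed.

Lemma Dg_sym x y : Dg mul x y = Dg mul y x.
Proof. by apply: sym_connect_sym => a b; rewrite Rg_sym Lg_sym. Qed.

Lemma Dg_trans y x z : Dg mul x y -> Dg mul y z -> Dg mul x z.
Proof. exact: connect_trans. Qed.

Lemma Rg_Dg x y : Rg mul x y -> Dg mul x y.
Proof. by move=> xy; apply: connect1; rewrite xy. Qed.

Lemma Lg_Dg x y : Lg mul x y -> Dg mul x y.
Proof. by move=> xy; apply: connect1; rewrite xy orbT. Qed.

Lemma Dg_leJg x y : Dg mul x y -> leJg mul x y.
Proof.
move=> /connectP[p]; elim: p x => [|z p IH] x /=; first by move=> _ ->; exact/leRg_leJg/leRg_refl.
move=> /andP[/orP[/andP[xz _]|/andP[xz _]] pz] zy.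
  exact: leJg_trans (leRg_leJg xz) (IH z pz zy).
exact: leJg_trans (leLg_leJg xz) (IH z pz zy).
Qed.

End Green.

Section Powers.
Variables (S : finType) (mul : S -> S -> S).
Hypothesis mulA : associative mul.

(* [spow q n] is the power q^(n+1). *)
Definition spow q n := iter n (mul q) q.

Lemma spow_add q m n : mul (spow q m) (spow q n) = spow q (m + n).+1.
Proof. by elim: m => [|m IH] //=; rewrite -mulA IH. Qed.

Lemma spowSr q n : spow q n.+1 = mul (spow q n) q.
Proof. by rewrite (spow_add q n 0) addn0. Qed.

Lemma spow_period q i j : (i < j)%N -> spow q i = spow q j ->
  forall m k, (i <= m)%N -> spow q (m + k * (j - i)) = spow q m.
Proof.
move=> ij eqij m k im; elim: k => [|k IH]; first by rewrite addn0.
have shift n : (i <= n)%N -> spow q (n + (j - i)) = spow q n.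
  move=> ni; have -> : (n + (j - i) = (n - i) + j)%N by lia.
  by rewrite /spow !iterD -/(spow q i) -/(spow q j) -eqij -iterD subnK.
have -> : (m + k.+1 * (j - i) = m + k * (j - i) + (j - i))%N by rewrite mulSn; lia.
by rewrite shift ?IH //; lia.
Qed.

Lemma exists_idem_spow q : exists n, mul (spow q n) (spow q n) = spow q n.
Proof.
have /injectivePn[i [j neqij eqij]] : ~~ injectiveb (fun i : 'I_#|S|.+1 => spow q i).
  by apply/injectiveP => /leq_card; rewrite card_ord ltnn.
wlog ltij : i j neqij eqij / (i < j)%N.
  move=> W; case: (ltngtP i j) => [|ji|/val_inj eqij']; first exact: W.
    by apply: (W j i) => //; rewrite eq_sym.
  by rewrite eqij' eqxx in neqij.
have n_gt0 : (0 < i.+1 * (j - i))%N by rewrite muln_gt0 subn_gt0.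
exists (i.+1 * (j - i)).-1; rewrite spow_add.
have -> : (((i.+1 * (j - i)).-1 + (i.+1 * (j - i)).-1).+1
          = (i.+1 * (j - i)).-1 + i.+1 * (j - i))%N by lia.
by rewrite spow_period // -ltnS prednK // leq_pmulr ?subn_gt0.
Qed.

End Powers.

Section Stability.
Variables (S : finType) (mul : S -> S -> S).
Hypothesis mulA : associative mul.

(* Iterating [w = a w q] gives [w = a^n w q^n]; take q^n idempotent, so that [w q^n = w]. *)
Lemma mull_stable a w q : w = mul (mul a w) q -> exists p, w = lmul1 mul p (mul a w).
Proof.
move=> fix_w.
have iter_w k : w = mul (spow mul a k) (mul w (spow mul q k)).
  elim: k => [|k IH]; first by rewrite {1}fix_w /= -mulA.
  by rewrite spowSr // {1}IH {1}fix_w !mulA.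
have [n idem_n] := exists_idem_spow mulA q.
have w_qn : mul w (spow mul q n) = w by rewrite {1}(iter_w n) -!mulA idem_n -iter_w.
have := iter_w n; rewrite w_qn; case: n {idem_n iter_w w_qn} => [|n] w_eq.
  by exists None.
by exists (Some (spow mul a n)); rewrite /= mulA -spowSr.
Qed.

Lemma leJg_leLg_mull x w : leJg mul w (mul x w) -> leLg mul w (mul x w).
Proof.
move/leJgP => [p [q w_eq]]; rewrite lmul1_mul // in w_eq; apply/leLgP.
case: q w_eq => [q|] /= w_eq; last by exists p; rewrite lmul1_mul.
have [p' w_p'] := mull_stable w_eq; have [p'' comp_p''] := lmul1_comp mulA p' p x.
by exists p''; rewrite {1}w_p' !lmul1_mul // comp_p''.
Qed.

End Stability.

Section Opposite.
Variables (S : finType) (mul : S -> S -> S).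
Hypothesis mulA : associative mul.

Let mulop a b := mul b a.

Lemma mulopA : associative mulop.
Proof. by move=> x y z; rewrite /mulop mulA. Qed.

Lemma leJg_op x y : leJg mul x y -> leJg mulop x y.
Proof.
move=> /leJgP [p [q ->]]; apply/leJgP; exists q, p.
by case: p => [s|]; case: q => [t|] //=; rewrite /mulop mulA.
Qed.

Lemma leJg_leRg_mulr w x : leJg mul w (mul w x) -> leRg mul w (mul w x).
Proof. by move/leJg_op; exact: (leJg_leLg_mull mulopA). Qed.

End Opposite.

Section DClasses.
Variables (S : finType) (mul : S -> S -> S).
Hypothesis mulA : associative mul.

Lemma leJg_Dg x y : leJg mul x y -> leJg mul y x -> Dg mul x y.
Proof.
move=> xy yx; move/leJgP: xy => [p [q x_eq]]; rewrite -lmul1_rmul1 // in x_eq.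
have yq_R : Rg mul (rmul1 mul y q) y.
  case: q x_eq => [q|] /= x_eq; last exact: Rg_refl.
  rewrite /Rg leRg_mulr /=; apply: leJg_leRg_mulr => //.
  by apply: leJg_trans yx _ => //; apply/leLg_leJg/leLgP; exists p.
have x_L : Lg mul x (rmul1 mul y q).
  move: (rmul1 mul y q) x_eq yq_R => yq x_eq yq_R.
  case: p x_eq => [p|] /= x_eq; last by rewrite x_eq Lg_refl.
  rewrite /Lg x_eq leLg_mull /=; apply: leJg_leLg_mull => //; rewrite -x_eq.
  exact: leJg_trans (leRg_leJg (andP yq_R).1) yx.
exact: Dg_trans (Lg_Dg x_L) (Rg_Dg yq_R).
Qed.

Lemma Dg_mull_Lg x y : Dg mul (mul x y) y -> Lg mul (mul x y) y.
Proof.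
rewrite Dg_sym => /(Dg_leJg mulA) yxy.
by rewrite /Lg leLg_mull leJg_leLg_mull.
Qed.

Lemma Dclass_eq x y : Dg mul x y -> Dclass mul x = Dclass mul y.
Proof.
move=> xy; apply/setP => z; rewrite !inE; apply/idP/idP; last exact: Dg_trans.
by apply: Dg_trans; rewrite Dg_sym.
Qed.

Lemma DclassE D x : D \in Dclasses mul -> x \in D -> D = Dclass mul x.
Proof. by move=> /imsetP[z _ ->]; rewrite inE => /Dclass_eq. Qed.

Lemma Dclasses_eq D1 D2 x : D1 \in Dclasses mul -> D2 \in Dclasses mul ->
  x \in D1 -> x \in D2 -> D1 = D2.
Proof. by move=> D1P D2P xD1 xD2; rewrite (DclassE D1P xD1) (DclassE D2P xD2). Qed.

Lemma Dclasses_Dg D x y : D \in Dclasses mul -> x \in D -> y \in D -> Dg mul x y.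
Proof. by move=> DP xD; rewrite (DclassE DP xD) inE. Qed.

Lemma leD_trans D2 D1 D3 : D2 \in Dclasses mul ->
  leD mul D1 D2 -> leD mul D2 D3 -> leD mul D1 D3.
Proof.
move=> D2P /existsP[x1 /andP[x1D /existsP[y2 /andP[y2D x1y2]]]].
move=> /existsP[x2 /andP[x2D /existsP[y3 /andP[y3D x2y3]]]].
apply/existsP; exists x1; rewrite x1D; apply/existsP; exists y3; rewrite y3D /=.
exact: leJg_trans x1y2 (leJg_trans _ (Dg_leJg mulA (Dclasses_Dg D2P y2D x2D)) x2y3).
Qed.

Lemma leD_anti D1 D2 : D1 \in Dclasses mul -> D2 \in Dclasses mul ->
  leD mul D1 D2 -> leD mul D2 D1 -> D1 = D2.
Proof.
move=> D1P D2P /existsP[x1 /andP[x1D /existsP[y2 /andP[y2D x1y2]]]].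
move=> /existsP[x2 /andP[x2D /existsP[y1 /andP[y1D x2y1]]]].
apply: (Dclasses_eq D1P D2P x1D); rewrite (DclassE D2P y2D) inE Dg_sym.
apply: leJg_Dg x1y2 _ => //.
apply: leJg_trans (Dg_leJg mulA (Dclasses_Dg D2P y2D x2D)) _ => //.
exact: leJg_trans x2y1 (Dg_leJg mulA (Dclasses_Dg D1P y1D x1D)).
Qed.

Lemma ltD_neq (D1 D2 : DCl mul) : ltD mul (val D1) (val D2) -> D1 != D2.
Proof. by case/andP => + _; apply: contra => /eqP->. Qed.

Lemma ltD_asym (D1 D2 : DCl mul) : ltD mul (val D1) (val D2) -> ~~ ltD mul (val D2) (val D1).
Proof.
move=> /andP[neq12 le12]; apply/negP => /andP[_ le21].
by rewrite (leD_anti (valP D1) (valP D2) le12 le21) eqxx in neq12.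
Qed.

Lemma ltD_trans (D2 D1 D3 : DCl mul) :
  ltD mul (val D1) (val D2) -> ltD mul (val D2) (val D3) -> ltD mul (val D1) (val D3).
Proof.
move=> lt12 lt23; have le13 := leD_trans (valP D2) (andP lt12).2 (andP lt23).2.
rewrite /ltD le13 andbT; apply: contraTneq lt12 => ->.
by rewrite (ltD_asym lt23).
Qed.

Lemma ltD_mull (D D' : DCl mul) x z : z \in val D -> mul x z \in val D' ->
  mul x z \notin val D -> ltD mul (val D') (val D).
Proof.
move=> zD xzD' xz_notD; apply/andP; split.
  by apply: contraNneq xz_notD => <-.
apply/existsP; exists (mul x z); rewrite xzD'; apply/existsP; exists z.
by rewrite zD leLg_leJg // leLg_mull.
Qed.

End DClasses.

Section Involution.
Variables (S : finType) (mul : S -> S -> S) (star : S -> S).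
Hypotheses (starK : involutive star)
  (starM : forall x y, star (mul x y) = mul (star y) (star x)).

Lemma leRg_star x y : leRg mul x y -> leLg mul (star x) (star y).
Proof. by move/leRgP=> [[s|] ->]; apply/leLgP; [exists (Some (star s)); rewrite starM | exists None]. Qed.

Lemma leLg_star x y : leLg mul x y -> leRg mul (star x) (star y).
Proof. by move/leLgP=> [[s|] ->]; apply/leRgP; [exists (Some (star s)); rewrite starM | exists None]. Qed.

Lemma Rg_starE x y : Rg mul (star x) (star y) = Lg mul x y.
Proof.
rewrite /Rg /Lg; apply/andP/andP => -[xy yx]; last by rewrite !leLg_star.
by move: xy yx => /leRg_star + /leRg_star; rewrite !starK.
Qed.

Lemma Lg_starE x y : Lg mul (star x) (star y) = Rg mul x y.
Proof. by rewrite -Rg_starE !starK. Qed.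

Lemma Dg_star x y : Dg mul x y -> Dg mul (star x) (star y).
Proof.
move=> /connectP[p]; elim: p x => [|z p IH] x /=; first by move=> _ ->; exact: Dg_refl.
move=> /andP[xz pz] zy; apply: Dg_trans (IH z pz zy).
by case/orP: xz => [xz|xz]; [apply: Lg_Dg; rewrite Lg_starE | apply: Rg_Dg; rewrite Rg_starE].
Qed.

End Involution.

Local Open Scope ring_scope.

Lemma sum_mul_eq (R : comPzRingType) (T : finType) (F : T -> R) b :
  \sum_y F y * (y == b)%:R = F b.
Proof.
by rewrite (bigD1 b) //= eqxx mulr1 big1 ?addr0 // => y /negbTE->; rewrite mulr0.
Qed.

Lemma sum_pair (V : nmodType) (A B : finType) (F : A * B -> V) :
  \sum_(p : A * B) F p = \sum_(a : A) \sum_(b : B) F (a, b).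
Proof. by rewrite pair_bigA; apply: eq_bigr => -[]. Qed.

Section LinearCombinations.
Variables (R : comPzRingType) (T : finType) (Lam : finType) (M : Lam -> finType)
  (C : forall l, M l -> M l -> {ffun T -> R}).

Definition lincomb (P : pred Lam) (coef : forall l, M l -> M l -> R) : {ffun T -> R} :=
  [ffun z => \sum_(l : Lam | P l) \sum_(s : M l) \sum_(t : M l) coef l s t * @C l s t z].

Lemma lincombE P coef : lincomb P coef =
  \sum_(l : Lam | P l) \sum_(s : M l) \sum_(t : M l) fscale R T (coef l s t) (@C l s t).
Proof.
apply/ffunP => z; rewrite ffunE sum_ffunE; apply: eq_bigr => l _.
rewrite sum_ffunE; apply: eq_bigr => s _; rewrite sum_ffunE; apply: eq_bigr => t _.
by rewrite ffunE.
Qed.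

Definition spanned (P : pred Lam) (v : {ffun T -> R}) := exists coef, v = lincomb P coef.

Variable P : pred Lam.

Lemma spanned0 : spanned P 0.
Proof.
exists (fun _ _ _ => 0); apply/ffunP => z; rewrite !ffunE.
by rewrite big1 // => l _; rewrite big1 // => s _; rewrite big1 // => t _; rewrite mul0r.
Qed.

Lemma spannedD v w : spanned P v -> spanned P w -> spanned P (v + w).
Proof.
move=> [cv ->] [cw ->]; exists (fun l s t => cv l s t + cw l s t).
apply/ffunP => z; rewrite !ffunE -big_split; apply: eq_bigr => l _.
rewrite -big_split; apply: eq_bigr => s _; rewrite -big_split; apply: eq_bigr => t _.
by rewrite mulrDl.
Qed.

Lemma spannedZ k v : spanned P v -> spanned P (fscale R T k v).
Proof.
move=> [cv ->]; exists (fun l s t => k * cv l s t).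
apply/ffunP => z; rewrite !ffunE mulr_sumr; apply: eq_bigr => l _.
rewrite mulr_sumr; apply: eq_bigr => s _; rewrite mulr_sumr; apply: eq_bigr => t _.
by rewrite mulrA.
Qed.

Lemma spanned_sum (I : finType) (J : pred I) (F : I -> {ffun T -> R}) :
  (forall i, J i -> spanned P (F i)) -> spanned P (\sum_(i | J i) F i).
Proof. by move=> FP; apply: (big_ind (spanned P)) => //; [exact: spanned0 | exact: spannedD]. Qed.

Lemma spanned_basis l s t : P l -> spanned P (@C l s t).
Proof.
move=> Pl; exists (fun l' s' t' => (Tagged (fun l => M l * M l)%type (s', t') ==
                                    Tagged (fun l => M l * M l)%type (s, t))%:R).
apply/ffunP => z; rewrite ffunE (bigD1 l) //= [X in _ + X]big1 ?addr0; last first.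
  move=> l' /andP[_ neq_l']; apply: big1 => s' _; apply: big1 => t' _.
  by case: eqP => [/(congr1 tag) /= eq_l|]; [rewrite eq_l eqxx in neq_l' | rewrite mul0r].
rewrite (bigD1 s) //= [X in _ + X]big1 ?addr0; last first.
  move=> s' neq_s'; apply: big1 => t' _.
  by rewrite eq_Tagged /= xpair_eqE (negbTE neq_s') mul0r.
rewrite (bigD1 t) //= [X in _ + X]big1 ?addr0; last first.
  by move=> t' neq_t'; rewrite eq_Tagged /= xpair_eqE eqxx (negbTE neq_t') mul0r.
by rewrite eqxx mul1r.
Qed.

End LinearCombinations.

Section CellularAxioms.
Variables (R : comPzRingType) (T : finType)
  (mul : {ffun T -> R} -> {ffun T -> R} -> {ffun T -> R})
  (star : {ffun T -> R} -> {ffun T -> R})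
  (Lam : finType) (le : rel Lam) (M : Lam -> finType)
  (C : forall l, M l -> M l -> {ffun T -> R}).

Definition cell_mul_axiom :=
  forall (l : Lam) (s : M l) (a : {ffun T -> R}), exists r : M l -> R, forall t : M l,
    exists coef, mul a (C s t) =
      [ffun z => \sum_(s' : M l) r s' * C s' t z] + lincomb C (fun m => le m l && (m != l)) coef.

Lemma cellularI :
  [/\ forall l, le l l, forall l m, le l m -> le m l -> l = m &
      forall l m n, le l m -> le m n -> le l n] ->
  (forall coef, lincomb C predT coef = 0 -> forall l s t, coef l s t = 0) ->
  (forall v, spanned C predT v) ->
  [/\ forall a b, star (a + b) = star a + star b,
      forall k a, star (fscale R T k a) = fscale R T k (star a),
      involutive star,
      forall a b, star (mul a b) = mul (star b) (star a) &
      forall l s t, star (@C l s t) = C t s] ->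
  cell_mul_axiom -> cellular R T mul star Lam le M C.
Proof.
by move=> order free span star_axioms mul_axiom; split=> //; split=> //; split.
Qed.

Hypothesis cellC : cellular R T mul star Lam le M C.

Lemma cellular_order :
  [/\ forall l, le l l, forall l m, le l m -> le m l -> l = m &
      forall l m n, le l m -> le m n -> le l n].
Proof. by case: cellC. Qed.

Lemma cellular_free coef : lincomb C predT coef = 0 -> forall l s t, coef l s t = 0.
Proof. by case: cellC => _ [free _]; apply: free. Qed.

Lemma cellular_spanning v : spanned C predT v.
Proof. by case: cellC => _ [_ [span _]]; apply: span. Qed.

Lemma cellular_star_basis l s t : star (@C l s t) = C t s.
Proof. by case: cellC => _ [_ [_ [[_ _ _ _ starC] _]]]; apply: starC. Qed.

Lemma cellular_mul_axiom : cell_mul_axiom.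
Proof. by case: cellC => _ [_ [_ [_ mul_axiom]]]; apply: mul_axiom. Qed.

End CellularAxioms.

Lemma ffun_delta_sum (R : comPzRingType) (T : finType) (v : {ffun T -> R}) :
  v = \sum_x fscale R T (v x) (delta R T x).
Proof.
apply/ffunP => z; rewrite sum_ffunE (bigD1 z) //= big1 => [|x /negbTE neq_x].
  by rewrite !ffunE eqxx mulr1 addr0.
by rewrite !ffunE eq_sym neq_x mulr0.
Qed.

Section TwistedAlgebra.
Variables (S : finType) (mul : S -> S -> S) (star : S -> S)
  (R : comPzRingType) (alpha : S -> S -> R).
Hypotheses (starK : involutive star)
  (starM : forall x y, star (mul x y) = mul (star y) (star x))
  (alpha_star : forall x y, alpha x y = alpha (star y) (star x)).

Local Notation smul := (smul S mul R alpha).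
Local Notation sstar := (sstar S star R).
Local Notation delta := (delta R S).

Lemma smulE a b z :
  smul a b z = \sum_x \sum_y (if mul x y == z then alpha x y * a x * b y else 0).
Proof. by rewrite ffunE; apply: eq_bigr => x _; rewrite big_mkcond. Qed.

Lemma smul_deltal x b z :
  smul (delta x) b z = \sum_y (if mul x y == z then alpha x y * b y else 0).
Proof.
rewrite smulE (bigD1 x) //= [X in _ + X]big1 ?addr0 => [|x' neq_x'].
  by apply: eq_bigr => y _; rewrite ffunE eqxx mulr1.
by apply: big1 => y _; rewrite ffunE (negbTE neq_x') mulr0 mul0r if_same.
Qed.

Lemma smul_sum_deltal a b : smul a b = \sum_x fscale R S (a x) (smul (delta x) b).
Proof.
apply/ffunP => z; rewrite smulE sum_ffunE; apply: eq_bigr => x _.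
rewrite ffunE smul_deltal mulr_sumr; apply: eq_bigr => y _.
by case: ifP => _; rewrite ?mulr0 // mulrA [a x * _]mulrC.
Qed.

Lemma sstarE a z : sstar a z = a (star z).
Proof.
rewrite ffunE (big_pred1 (star z)) // => x /=.
by apply/eqP/eqP => [<-|->]; rewrite starK.
Qed.

Lemma sstarD a b : sstar (a + b) = sstar a + sstar b.
Proof. by apply/ffunP => z; rewrite [RHS]ffunE !sstarE ffunE. Qed.

Lemma sstarZ k a : sstar (fscale R S k a) = fscale R S k (sstar a).
Proof. by apply/ffunP => z; rewrite [RHS]ffunE !sstarE ffunE. Qed.

Lemma sstarK : involutive sstar.
Proof. by move=> a; apply/ffunP => z; rewrite !sstarE starK. Qed.

Lemma sstar_smul a b : sstar (smul a b) = smul (sstar b) (sstar a).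
Proof.
apply/ffunP => z; rewrite sstarE !smulE exchange_big.
rewrite (reindex_inj (can_inj starK)); apply: eq_bigr => y _.
rewrite (reindex_inj (can_inj starK)); apply: eq_bigr => x _.
rewrite !sstarE -starM (inj_eq (can_inj starK)) -alpha_star.
by case: eqP => // _; rewrite -!mulrA [b _ * _]mulrC.
Qed.

End TwistedAlgebra.

Section Structure.
Variables (S : finType) (mul : S -> S -> S) (star : S -> S)
  (one : {set S} -> S) (u : {set S} -> S).
Hypotheses (mulA : associative mul) (starK : involutive star)
  (starM : forall x y, star (mul x y) = mul (star y) (star x))
  (one_in : forall D, D \in Dclasses mul -> one D \in D)
  (one_idem : forall D, D \in Dclasses mul -> mul (one D) (one D) = one D)
  (one_star : forall D, D \in Dclasses mul -> star (one D) = one D)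
  (u_in : forall D L, D \in Dclasses mul -> L \in Lclasses_in mul D -> u L \in L)
  (u_R : forall D L, D \in Dclasses mul -> L \in Lclasses_in mul D ->
     Rg mul (u L) (one D)).

Definition sandwich L g K := mul (mul (star (u L)) g) (u K).

Lemma sandwich_star L g K : star (sandwich L g K) = sandwich K (star g) L.
Proof. by rewrite /sandwich !starM starK mulA. Qed.

Section OneDClass.
Variable D : DCl mul.
Local Notation e := (one (val D)).
Local Notation G := (GD S mul one (val D)).
Local Notation GT := (GT S mul one (val D)).
Local Notation LC := (LCl mul (val D)).

Lemma e_idem : mul e e = e. Proof. exact: one_idem (valP D). Qed.
Lemma e_star : star e = e. Proof. exact: one_star (valP D). Qed.

Lemma memD x : (x \in val D) = Dg mul e x.
Proof. by rewrite {1}(DclassE (valP D) (one_in (valP D))) inE. Qed.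

Lemma star_memD x : x \in val D -> star x \in val D.
Proof. by rewrite !memD => /(Dg_star starK starM); rewrite e_star. Qed.

Lemma mul_e_l x : leRg mul x e -> mul e x = x.
Proof. by move/leRgP => [[s|] ->] /=; rewrite ?mulA e_idem. Qed.

Lemma mul_e_r x : leLg mul x e -> mul x e = x.
Proof. by move/leLgP => [[s|] ->] /=; rewrite -?mulA e_idem. Qed.

(* A right inverse [t] with [x t = e], meaningful when [e <=_R x]. *)
Definition rinv x := odflt e [pick t | mul x t == e].

Lemma mul_rinv x : leRg mul e x -> mul x (rinv x) = e.
Proof.
move/leRgP => [q e_eq]; rewrite /rinv; case: pickP => [t /eqP //|/= no_t].
case: q e_eq => [s|] /= e_eq; first by have := no_t s; rewrite -e_eq eqxx.
by have := no_t e; rewrite -e_eq e_idem eqxx.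
Qed.

Lemma memG g : (g \in G) = Rg mul e g && Lg mul e g.
Proof. by rewrite inE. Qed.

Lemma G_mul_e_l g : g \in G -> mul e g = g.
Proof. by rewrite memG => /andP[/andP[_ ge] _]; apply: mul_e_l. Qed.

Lemma G_mul_e_r g : g \in G -> mul g e = g.
Proof. by rewrite memG => /andP[_ /andP[_ ge]]; apply: mul_e_r. Qed.

Lemma G_mul_rinv g : g \in G -> mul g (rinv g) = e.
Proof. by rewrite memG => /andP[/andP[eg _] _]; apply: mul_rinv. Qed.

Lemma G_star g : g \in G -> star g \in G.
Proof. by rewrite !memG => /andP[eg ge]; rewrite -e_star Rg_starE // Lg_starE // ge eg. Qed.

Lemma G_mul g h : g \in G -> h \in G -> mul g h \in G.
Proof.
move=> gG hG; move: (gG) (hG); rewrite !memG => /andP[Reg Leg] /andP[Reh Leh].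
have g_R : Rg mul g (mul g h) by rewrite -{1}(G_mul_e_r gG); apply: Rg_mul2l.
have h_L : Lg mul h (mul g h) by rewrite -{1}(G_mul_e_l hG); apply: Lg_mul2r.
by rewrite (Rg_trans mulA Reg g_R) (Lg_trans mulA Leh h_L).
Qed.

Section OneLclass.
Variable L : LC.
Local Notation uL := (u (val L)).

Lemma u_Rg : Rg mul uL e. Proof. exact: u_R (valP D) (valP L). Qed.

Lemma u_Lg x : (x \in val L) = Lg mul uL x.
Proof.
case/imsetP: (valP L) (u_in (valP D) (valP L)) => y _ ->.
rewrite !inE => yu; apply/idP/idP => [yx|ux].
  by apply: (Lg_trans mulA _ yx); rewrite Lg_sym.
exact: (Lg_trans mulA yu ux).
Qed.

Lemma mul_e_u : mul e uL = uL.
Proof. by apply: mul_e_l; case/andP: u_Rg. Qed.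

Lemma u_mul_rinv : mul uL (rinv uL) = e.
Proof. by apply: mul_rinv; case/andP: u_Rg. Qed.

Lemma star_u_mul_e : mul (star uL) e = star uL.
Proof. by rewrite -{1}e_star -starM mul_e_u. Qed.

Lemma star_rinv_mul_star_u : mul (star (rinv uL)) (star uL) = e.
Proof. by rewrite -starM u_mul_rinv e_star. Qed.

Lemma star_u_Lg : Lg mul (star uL) e.
Proof. by rewrite -e_star Lg_starE // u_Rg. Qed.

End OneLclass.

Lemma Lclass_mem x : x \in val D -> Lclass mul x \in Lclasses_in mul (val D).
Proof. exact: imset_f. Qed.

Lemma LCl_eq (L K : LC) : Lg mul (u (val L)) (u (val K)) -> L = K.
Proof.
move=> uLK; apply/val_inj/setP => x.
rewrite !u_Lg; apply/idP/idP => [Lx|Kx]; last exact: (Lg_trans mulA uLK Kx).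
by apply: (Lg_trans mulA _ Lx); rewrite Lg_sym.
Qed.

Lemma u_memG (K : LC) : Lg mul (u (val K)) e -> u (val K) \in G.
Proof. by move=> uKe; rewrite memG Rg_sym u_Rg Lg_sym uKe. Qed.

Definition GT_star (g : GT) : GT := Sub (star (val g)) (G_star (valP g)).

Lemma GT_starK : involutive GT_star.
Proof. by move=> g; apply: val_inj; rewrite /= starK. Qed.

Lemma sandwich_Rg (L K : LC) (g : GT) :
  Rg mul (sandwich (val L) (val g) (val K)) (star (u (val L))).
Proof.
rewrite /Rg {1}/sandwich -mulA leRg_mulr /=; apply/leRgP.
exists (Some (mul (rinv (u (val K))) (rinv (val g)))) => /=.
rewrite /sandwich -!mulA (mulA (u _)) u_mul_rinv (mulA (val g)) G_mul_e_r ?(valP g) //.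
by rewrite G_mul_rinv ?(valP g) // star_u_mul_e.
Qed.

Lemma sandwich_Lg (L K : LC) (g : GT) :
  Lg mul (sandwich (val L) (val g) (val K)) (u (val K)).
Proof.
rewrite -(Rg_starE starK starM) sandwich_star.
exact: (sandwich_Rg K L (GT_star g)).
Qed.

Lemma sandwich_memD (L K : LC) (g : GT) : sandwich (val L) (val g) (val K) \in val D.
Proof.
rewrite memD Dg_sym; apply: Dg_trans (Rg_Dg (sandwich_Rg L K g)) _.
by rewrite Dg_sym; apply: Lg_Dg; rewrite Lg_sym star_u_Lg.
Qed.

Lemma sandwich_inj (L K L' K' : LC) (g g' : GT) :
  sandwich (val L) (val g) (val K) = sandwich (val L') (val g') (val K') ->
  [/\ L = L', K = K' & g = g'].
Proof.
move=> eq_sw; have eqL : L = L'.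
  apply: LCl_eq; rewrite -(Rg_starE starK starM).
  apply: (Rg_trans mulA (y := sandwich (val L) (val g) (val K))).
    by rewrite Rg_sym sandwich_Rg.
  by rewrite eq_sw sandwich_Rg.
have eqK : K = K'.
  apply: LCl_eq; apply: (Lg_trans mulA (y := sandwich (val L) (val g) (val K))).
    by rewrite Lg_sym sandwich_Lg.
  by rewrite eq_sw sandwich_Lg.
subst L' K'; split=> //; apply: val_inj.
have cancel_sw (h : GT) : mul (mul (star (rinv (u (val L)))) (sandwich (val L) (val h) (val K)))
    (rinv (u (val K))) = val h.
  rewrite /sandwich !mulA star_rinv_mul_star_u G_mul_e_l ?(valP h) // -mulA u_mul_rinv.
  exact/G_mul_e_r/(valP h).
by rewrite -cancel_sw eq_sw cancel_sw.
Qed.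

Lemma sandwich_eq (L K L' K' : LC) (g g' : GT) :
  (sandwich (val L) (val g) (val K) == sandwich (val L') (val g') (val K'))
  = [&& L == L', K == K' & g == g'].
Proof.
by apply/eqP/and3P => [/sandwich_inj[-> -> ->]|[/eqP-> /eqP-> /eqP->]]; rewrite ?eqxx.
Qed.

(* The [G]-component of [x] between [u_L^*] and [u_K]. *)
Definition core (L K : LC) x := mul (mul (star (rinv (u (val L)))) x) (rinv (u (val K))).

Section Core.
Variables (L K : LC) (x : S).
Hypotheses (xK : x \in val K) (xL : star x \in val L).

Lemma Rg_star_u : Rg mul x (star (u (val L))).
Proof. by rewrite -(Lg_starE starK starM) starK Lg_sym -u_Lg. Qed.

Lemma core_mul_u : mul (mul x (rinv (u (val K)))) (u (val K)) = x.
Proof.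
have := xK; rewrite u_Lg Lg_sym => /andP[/leLgP[p ->] _].
by rewrite -!(lmul1_mul mulA) u_mul_rinv mul_e_u.
Qed.

Lemma star_u_mul_core : mul (star (u (val L))) (mul (star (rinv (u (val L)))) x) = x.
Proof.
case/andP: Rg_star_u => /leRgP[q ->] _.
by rewrite -!(rmul1_mul mulA) star_rinv_mul_star_u star_u_mul_e.
Qed.

Lemma sandwich_core : sandwich (val L) (core L K x) (val K) = x.
Proof. by rewrite /sandwich /core (mulA (star _)) star_u_mul_core core_mul_u. Qed.

Lemma core_Rg : Rg mul (core L K x) (one (val D)).
Proof.
have [/leRgP[q x_eq] star_u_le] := andP Rg_star_u.
have core_le : leRg mul (mul (star (rinv (u (val L)))) x) (one (val D)).
  by rewrite x_eq -(rmul1_mul mulA) star_rinv_mul_star_u; apply/leRgP; exists q.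
apply/andP; split; first by apply: (leRg_trans mulA _ core_le); rewrite /core leRg_mulr.
rewrite -(star_rinv_mul_star_u L); apply: (leRg_trans mulA (leRg_mul2l mulA _ star_u_le)).
by rewrite -{1}core_mul_u !mulA leRg_mulr.
Qed.

End Core.

Lemma core_memG (L K : LC) x : x \in val K -> star x \in val L -> core L K x \in G.
Proof.
move=> xK xL; have xL' : star (star x) \in val K by rewrite starK.
have core_star : star (core L K x) = core K L (star x) by rewrite /core !starM starK mulA.
rewrite memG Rg_sym core_Rg //= -(Rg_starE starK starM) e_star core_star Rg_sym.
exact: core_Rg.
Qed.

Lemma sandwich_surj x : x \in val D ->
  exists (L K : LC) (g : GT), x = sandwich (val L) (val g) (val K).
Proof.
move=> xD; pose K : LC := Sub (Lclass mul x) (Lclass_mem xD).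
pose L : LC := Sub (Lclass mul (star x)) (Lclass_mem (star_memD xD)).
have xK : x \in val K by rewrite inE Lg_refl.
have xL : star x \in val L by rewrite inE Lg_refl.
by exists L, K, (Sub (core L K x) (core_memG xK xL)); rewrite sandwich_core.
Qed.

Lemma u_memD (L : LC) : u (val L) \in val D.
Proof. by rewrite memD; apply: Rg_Dg; rewrite Rg_sym u_Rg. Qed.

(* Stability makes [x u_L^*] [L]-equivalent to [u_L^*] as soon as it stays in [D]. *)
Lemma mul_star_u_memD x (L : LC) : mul x (star (u (val L))) \in val D ->
  exists (L' : LC) (h : GT), mul x (star (u (val L))) = mul (star (u (val L'))) (val h).
Proof.
move=> yD; have yL : Lg mul (mul x (star (u (val L)))) (star (u (val L))).
  exact/(Dg_mull_Lg mulA)/(Dclasses_Dg (valP D) yD)/star_memD/u_memD.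
have [L' [K' [g sw_eq]]] := sandwich_surj yD; rewrite sw_eq in yL *.
have uK'_G : u (val K') \in G.
  apply: u_memG; apply: (Lg_trans mulA _ (Lg_trans mulA yL (star_u_Lg L))).
  by rewrite Lg_sym sandwich_Lg.
by exists L', (Sub (mul (val g) (u (val K'))) (G_mul (valP g) uK'_G)); rewrite /sandwich -mulA.
Qed.

End OneDClass.

Lemma mul_sandwich_notin (D : DCl mul) (L K : LCl mul (val D)) (g : GT S mul one (val D)) x :
  mul x (star (u (val L))) \notin val D -> mul x (sandwich (val L) (val g) (val K)) \notin val D.
Proof.
apply: contra; rewrite !memD => xsw_D.
exact: Dg_trans xsw_D (Rg_Dg (Rg_mul2l mulA x (sandwich_Rg L K g))).
Qed.

Unset Implicit Arguments.
Section Algebra.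
Variables (R : comPzRingType) (alpha : S -> S -> R)
  (Lam : {set S} -> finType) (leLam : forall D, rel (Lam D))
  (M : forall D, Lam D -> finType)
  (c : forall D (l : Lam D), M D l -> M D l -> {ffun GT S mul one D -> R}).
Hypotheses (alpha_star : forall x y, alpha x y = alpha (star y) (star x))
  (alpha_R : forall x y z, Rg mul y z -> alpha x y = alpha x z)
  (cellG : forall D, D \in Dclasses mul ->
     cellular R (GT S mul one D) (gmul S mul one R D) (gstar S mul star one R D)
       (Lam D) (leLam D) (M D) (c D)).
Set Implicit Arguments.

Local Notation GT D := (GT S mul one (val D)).
Local Notation LC D := (LCl mul (val D)).
Local Notation BL := (BigLam S mul Lam).
Local Notation leB := (leBig S mul Lam leLam).
Local Notation BC := (BigC S mul star one R Lam M c u).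
Local Notation smul := (smul S mul R alpha).
Local Notation sstar := (sstar S star R).
Local Notation Tag D := (@Tagged (DCl mul) D (fun D => Lam (val D))).

Lemma cellular_group (D : DCl mul) :
  cellular R (GT D) (gmul S mul one R (val D)) (gstar S mul star one R (val D))
    (Lam (val D)) (leLam (val D)) (M (val D)) (c (val D)).
Proof. exact: cellG (valP D). Qed.

Lemma leBig_refl p : leB p p.
Proof.
case: p => D l; rewrite /leBig /= eqxx tagged_asE /=.
by have [refl _ _] := cellular_order (cellular_group D); rewrite refl orbT.
Qed.

Lemma leBig_anti p q : leB p q -> leB q p -> p = q.
Proof.
case: p => D l; case: q => D' l'; rewrite /leBig /=.
case/orP => [lt1|/andP[/eqP eqD le1]] /orP[lt2|/andP[/eqP eqD' le2]].
- by rewrite (negbTE (ltD_asym mulA lt1)) in lt2.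
- by subst D'; rewrite /ltD eqxx in lt1.
- by subst D'; rewrite /ltD eqxx in lt2.
- subst D'; rewrite !tagged_asE in le1 le2.
  by have [_ anti _] := cellular_order (cellular_group D); rewrite (anti _ _ le1 le2).
Qed.

Lemma leBig_trans p q r : leB p q -> leB q r -> leB p r.
Proof.
case: p => D l; case: q => D' l'; case: r => D'' l''; rewrite /leBig /=.
case/orP => [lt1|/andP[/eqP eqD le1]] /orP[lt2|/andP[/eqP eqD' le2]].
- by rewrite (ltD_trans mulA lt1 lt2).
- by subst D''; rewrite lt1.
- by subst D'; rewrite lt2.
- subst D' D''; rewrite !tagged_asE in le1 le2 *.
  by have [_ _ trans] := cellular_order (cellular_group D); rewrite (trans _ _ _ le1 le2) eqxx orbT.
Qed.

(* The copy [f |-> u_L^* f u_K] of [R[G_D]] inside [R^alpha[S]]. *)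
Definition sandwich_map (D : DCl mul) (L K : LC D) (f : {ffun GT D -> R}) : {ffun S -> R} :=
  \sum_(g : GT D) fscale R S (f g) (delta R S (sandwich (val L) (val g) (val K))).

Lemma BigCE p (a b : BigM S mul Lam M p) : BC p a b = sandwich_map a.1 b.1 (c _ _ a.2 b.2).
Proof. by []. Qed.

Section SandwichMap.
Variables (D : DCl mul) (L K : LC D).

Lemma sandwich_mapE f z :
  sandwich_map L K f z = \sum_(g : GT D) f g * (z == sandwich (val L) (val g) (val K))%:R.
Proof. by rewrite sum_ffunE; apply: eq_bigr => g _; rewrite !ffunE. Qed.

Lemma sandwich_mapD f f' :
  sandwich_map L K (f + f') = sandwich_map L K f + sandwich_map L K f'.
Proof.
apply/ffunP => z; rewrite ffunE !sandwich_mapE -big_split.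
by apply: eq_bigr => g _; rewrite ffunE mulrDl.
Qed.

Lemma sandwich_map_sum (I : finType) (P : pred I) (F : I -> {ffun GT D -> R}) :
  sandwich_map L K (\sum_(i | P i) F i) = \sum_(i | P i) sandwich_map L K (F i).
Proof.
apply: big_morph => [f f'|]; first exact: sandwich_mapD.
by apply/ffunP => z; rewrite sandwich_mapE ffunE big1 // => g _; rewrite ffunE mul0r.
Qed.

Lemma sandwich_mapZ k f : sandwich_map L K (fscale R _ k f) = fscale R S k (sandwich_map L K f).
Proof.
apply/ffunP => z; rewrite ffunE !sandwich_mapE mulr_sumr.
by apply: eq_bigr => g _; rewrite ffunE mulrA.
Qed.

Lemma sandwich_map_delta g :
  sandwich_map L K (delta R (GT D) g) = delta R S (sandwich (val L) (val g) (val K)).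
Proof.
apply/ffunP => z; rewrite sandwich_mapE [RHS]ffunE.
by under eq_bigr do rewrite ffunE mulrC; rewrite sum_mul_eq.
Qed.

Lemma sandwich_map_notin f z : z \notin val D -> sandwich_map L K f z = 0.
Proof.
move=> z_notin; rewrite sandwich_mapE big1 // => g _.
by case: eqP => [z_eq|]; [rewrite z_eq sandwich_memD in z_notin | rewrite mulr0].
Qed.

Lemma sandwich_map_sandwich f (L' K' : LC D) g :
  sandwich_map L K f (sandwich (val L') (val g) (val K')) = ((L' == L) && (K' == K))%:R * f g.
Proof.
rewrite sandwich_mapE; under eq_bigr do rewrite sandwich_eq.
case: (L' == L) (K' == K) => [] [] /=; rewrite ?mul0r;
  try by rewrite big1 // => g' _; rewrite mulr0.
by under eq_bigr do rewrite eq_sym; rewrite sum_mul_eq mul1r.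
Qed.

Lemma spanned_sandwich_map (Q : pred BL) (P : pred (Lam (val D))) cg :
  (forall l, P l -> Q (Tag D l)) -> spanned BC Q (sandwich_map L K (lincomb (c (val D)) P cg)).
Proof.
move=> PQ; rewrite lincombE sandwich_map_sum; apply: spanned_sum => l Pl.
rewrite sandwich_map_sum; apply: spanned_sum => s _.
rewrite sandwich_map_sum; apply: spanned_sum => t _.
rewrite sandwich_mapZ; apply: spannedZ.
exact: (@spanned_basis _ _ _ _ BC _ (Tag D l) (L, s) (K, t) (PQ l Pl)).
Qed.

End SandwichMap.

Lemma spanned_delta (Q : pred BL) z :
  (forall q : BL, z \in val (tag q) -> Q q) -> spanned BC Q (delta R S z).
Proof.
move=> zQ; have Dz_class : Dclass mul z \in Dclasses mul by apply: imset_f.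
pose D : DCl mul := Sub (Dclass mul z) Dz_class.
have zD : z \in val D by rewrite inE Dg_refl.
have [L [K [g ->]]] := sandwich_surj zD.
have [cg cgE] := cellular_spanning (cellular_group D) (delta R (GT D) g).
by rewrite -sandwich_map_delta cgE; apply: spanned_sandwich_map => l _; apply: zQ.
Qed.

Lemma BC_spanning v : spanned BC predT v.
Proof.
rewrite (ffun_delta_sum v); apply: spanned_sum => z _.
exact/spannedZ/spanned_delta.
Qed.

Lemma sum_BigLam (F : BL -> R) :
  \sum_(p : BL) F p = \sum_(D : DCl mul) \sum_(l : Lam (val D)) F (Tag D l).
Proof.
rewrite (@sig_big_dep _ 0 +%R (DCl mul) (fun D => Lam (val D)) predT (fun _ _ => true)
  (fun D l => F (Tag D l))) /=.
by apply: eq_big => // -[].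
Qed.

Lemma lincomb_BC_sandwich coef (D : DCl mul) (L K : LC D) (g : GT D) :
  lincomb BC predT coef (sandwich (val L) (val g) (val K)) =
  lincomb (c (val D)) predT (fun l s t => coef (Tag D l) (L, s) (K, t)) g.
Proof.
rewrite !ffunE sum_BigLam (bigD1 D) //= [X in _ + X]big1 ?addr0 => [|D' neq_D']; last first.
  apply: big1 => l _; apply: big1 => a _; apply: big1 => b _.
  rewrite BigCE sandwich_map_notin ?mulr0 //; apply: contra neq_D' => sw_D'.
  by apply/eqP/val_inj/(Dclasses_eq (valP D') (valP D) sw_D'); apply: sandwich_memD.
apply: eq_bigr => l _; rewrite sum_pair (bigD1 L) //= [X in _ + X]big1 ?addr0 => [|L' neq_L'].
  apply: eq_bigr => s _; rewrite sum_pair (bigD1 K) //= [X in _ + X]big1 ?addr0 => [|K' neq_K'].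
    by apply: eq_bigr => t _; rewrite BigCE sandwich_map_sandwich !eqxx mul1r.
  by apply: big1 => t _; rewrite BigCE sandwich_map_sandwich [K == K']eq_sym (negbTE neq_K') andbF mul0r mulr0.
apply: big1 => s _; apply: big1 => b _.
by rewrite BigCE sandwich_map_sandwich [L == L']eq_sym (negbTE neq_L') mul0r mulr0.
Qed.

Lemma BC_free coef : lincomb BC predT coef = 0 -> forall p a b, coef p a b = 0.
Proof.
move=> comb0 [D l] [L s] [K t].
apply: (cellular_free (cellular_group D) (coef := fun l s t => coef (Tag D l) (L, s) (K, t))).
by apply/ffunP => g; rewrite -lincomb_BC_sandwich comb0 !ffunE.
Qed.

Lemma gstarE (D : DCl mul) (f : {ffun GT D -> R}) g :
  gstar S mul star one R (val D) f g = f (GT_star g).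
Proof.
rewrite ffunE (big_pred1 (GT_star g)) // => h /=.
by rewrite -val_eqE /=; apply/eqP/eqP => [<-|->]; rewrite starK.
Qed.

Lemma sstar_sandwich_map (D : DCl mul) (L K : LC D) f :
  sstar (sandwich_map L K f) = sandwich_map K L (gstar S mul star one R (val D) f).
Proof.
apply/ffunP => z; rewrite sstarE // !sandwich_mapE [RHS](reindex_inj (can_inj (@GT_starK D))).
apply: eq_bigr => g _; rewrite gstarE GT_starK /= -sandwich_star.
by rewrite -[star z == _](inj_eq (can_inj starK)) starK.
Qed.

Lemma sstar_BC p a b : sstar (BC p a b) = BC p b a.
Proof. by rewrite !BigCE sstar_sandwich_map (cellular_star_basis (cellular_group (tag p))). Qed.

Lemma smul_delta_sandwich_map x (D : DCl mul) (L K : LC D) f :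
  smul (delta R S x) (sandwich_map L K f) =
  fscale R S (alpha x (star (u (val L))))
    (\sum_(g : GT D) fscale R S (f g) (delta R S (mul x (sandwich (val L) (val g) (val K))))).
Proof.
apply/ffunP => z; rewrite smul_deltal [RHS]ffunE sum_ffunE mulr_sumr.
transitivity (\sum_(g : GT D) \sum_y (if mul x y == z then alpha x y * f g else 0) *
                                  (y == sandwich (val L) (val g) (val K))%:R).
  rewrite exchange_big; apply: eq_bigr => y _; rewrite sandwich_mapE.
  case: ifP => _; last by rewrite big1 // => g _; rewrite mul0r.
  by rewrite mulr_sumr; apply: eq_bigr => g _; rewrite mulrA.
apply: eq_bigr => g _; rewrite sum_mul_eq !ffunE (alpha_R x _ _ (sandwich_Rg L K g)) eq_sym.
by case: eqP => _; rewrite ?mulr1 ?mulr0.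
Qed.

Lemma gmul_deltal (D : DCl mul) (h g : GT D) (f : {ffun GT D -> R}) :
  gmul S mul one R (val D) (delta R (GT D) h) f g =
  \sum_(g' : GT D) f g' * (mul (val h) (val g') == val g)%:R.
Proof.
rewrite ffunE (bigD1 h) //= [X in _ + X]big1 ?addr0 => [|h' neq_h'].
  rewrite big_mkcond; apply: eq_bigr => g' _; rewrite ffunE eqxx !mul1r.
  by case: ifP; rewrite ?mulr1 ?mulr0.
by apply: big1 => g' _; rewrite ffunE (negbTE neq_h') mulr0 mul0r.
Qed.

Lemma sandwich_map_gmul_delta (D : DCl mul) (L K : LC D) (h : GT D) (f : {ffun GT D -> R}) :
  \sum_(g : GT D) fscale R S (f g) (delta R S (sandwich (val L) (mul (val h) (val g)) (val K)))
  = sandwich_map L K (gmul S mul one R (val D) (delta R (GT D) h) f).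
Proof.
apply/ffunP => z; rewrite sandwich_mapE sum_ffunE.
under [RHS]eq_bigr do rewrite gmul_deltal mulr_suml.
rewrite [RHS]exchange_big; apply: eq_bigr => g _; rewrite !ffunE.
pose hg : GT D := Sub (mul (val h) (val g)) (G_mul (valP h) (valP g)).
rewrite (bigD1 hg) //= eqxx mulr1 big1 ?addr0 // => g' neq_g'.
by case: eqP => [hg_g'|]; [rewrite (_ : g' = hg) ?eqxx // in neq_g'; apply: val_inj | rewrite mulr0 mul0r].
Qed.

Lemma sandwich_map_comb (D : DCl mul) (l : Lam (val D)) (L K : LC D) (r : M _ l -> R) t :
  sandwich_map L K [ffun g => \sum_(s : M _ l) r s * c _ l s t g] =
  \sum_(s : M _ l) fscale R S (r s) (BC (Tag D l) (L, s) (K, t)).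
Proof.
have -> : [ffun g => \sum_(s : M _ l) r s * c _ l s t g] = \sum_s fscale R _ (r s) (c _ l s t).
  by apply/ffunP => g; rewrite ffunE sum_ffunE; apply: eq_bigr => s _; rewrite ffunE.
by rewrite sandwich_map_sum; apply: eq_bigr => s _; rewrite sandwich_mapZ.
Qed.

Definition below (p : BL) : pred BL := fun q => leB q p && (q != p).

Lemma spanned_mul_delta_BC_notin x (D : DCl mul) (l : Lam (val D)) (L K : LC D) s t :
  mul x (star (u (val L))) \notin val D ->
  spanned BC (below (Tag D l)) (smul (delta R S x) (BC (Tag D l) (L, s) (K, t))).
Proof.
move=> y_notD; rewrite BigCE smul_delta_sandwich_map; apply/spannedZ/spanned_sum => g _.
apply/spannedZ/spanned_delta => q xsw_q.
have lt_qD := ltD_mull (sandwich_memD L K g) xsw_q (mul_sandwich_notin K g y_notD).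
by rewrite /below /leBig lt_qD /=; apply: contraNneq (ltD_neq lt_qD) => ->.
Qed.

Lemma smul_delta_BC_memD x (D : DCl mul) (l : Lam (val D)) (L L' K : LC D) (h : GT D) s t :
  mul x (star (u (val L))) = mul (star (u (val L'))) (val h) ->
  smul (delta R S x) (BC (Tag D l) (L, s) (K, t)) =
  fscale R S (alpha x (star (u (val L))))
    (sandwich_map L' K (gmul S mul one R (val D) (delta R (GT D) h) (c _ l s t))).
Proof.
move=> y_eq.
rewrite (BigCE (p := Tag D l) (L, s) (K, t) : _ = sandwich_map (D := D) L K (c (val D) l s t)).
rewrite smul_delta_sandwich_map -sandwich_map_gmul_delta; congr fscale.
by apply: eq_bigr => g _; rewrite /sandwich !mulA y_eq -!mulA.
Qed.

Lemma mul_delta_BC (p : BL) (s : BigM S mul Lam M p) x :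
  exists r : BigM S mul Lam M p -> R, forall t, exists2 w, spanned BC (below p) w &
    smul (delta R S x) (BC p s t) = \sum_s' fscale R S (r s') (BC p s' t) + w.
Proof.
case: p s => D l /= [L s0].
have [yD | y_notD] := boolP (mul x (star (u (val L))) \in val D); last first.
  exists (fun=> 0) => -[K t0]; exists (smul (delta R S x) (BC (Tag D l) (L, s0) (K, t0))).
    exact: spanned_mul_delta_BC_notin.
  by rewrite big1 ?add0r // => s' _; apply/ffunP => z; rewrite !ffunE mul0r.
have [L' [h y_eq]] := mul_star_u_memD yD.
have [rg rgP] := cellular_mul_axiom (cellular_group D) s0 (delta R (GT D) h).
pose a := alpha x (star (u (val L))).
exists (fun s' => (s'.1 == L')%:R * (a * rg s'.2)) => -[K t0]; have [cg cgE] := rgP t0.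
exists (fscale R S a (sandwich_map L' K (lincomb (c (val D)) (fun m => leLam _ m l && (m != l)) cg))).
  apply/spannedZ/spanned_sandwich_map => m /andP[le_ml neq_ml].
  by rewrite /below /leBig /= eqxx tagged_asE le_ml orbT eq_Tagged.
have -> : \sum_(s' : BigM S mul Lam M (Tag D l))
      fscale R S ((s'.1 == L')%:R * (a * rg s'.2)) (BC (Tag D l) s' (K, t0)) =
    fscale R S a (\sum_s' fscale R S (rg s') (BC (Tag D l) (L', s') (K, t0))).
  rewrite sum_pair (bigD1 L') //= [X in _ + X]big1 ?addr0 => [|L'' neq_L''].
    apply/ffunP => z; rewrite ffunE !sum_ffunE mulr_sumr.
    by apply: eq_bigr => s' _; rewrite !ffunE eqxx mul1r mulrA.
  by apply: big1 => s' _; apply/ffunP => z; rewrite !ffunE (negbTE neq_L'') !mul0r.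
rewrite (smul_delta_BC_memD _ _ _ y_eq) cgE sandwich_mapD sandwich_map_comb.
by apply/ffunP => z; rewrite !ffunE mulrDr.
Qed.

Lemma BC_mul_axiom : cell_mul_axiom smul leB BC.
Proof.
move=> p s a; have /fin_all_exists[r rP] := mul_delta_BC s.
exists (fun s' => \sum_x a x * r x s') => t.
have /fin_all_exists[w wP] x : exists w, spanned BC (below p) w /\
    smul (delta R S x) (BC p s t) = \sum_s' fscale R S (r x s') (BC p s' t) + w.
  by have [w ? ?] := rP x t; exists w.
have [coef coefE] : spanned BC (below p) (\sum_x fscale R S (a x) (w x)).
  by apply: spanned_sum => x _; apply/spannedZ; case: (wP x).
exists coef; rewrite -coefE smul_sum_deltal; apply/ffunP => z.
rewrite !ffunE !sum_ffunE.
under eq_bigr do rewrite ffunE (proj2 (wP _)) ffunE sum_ffunE mulrDr.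
rewrite big_split /=; congr (_ + _); last by apply: eq_bigr => x _; rewrite ffunE.
under eq_bigr do rewrite mulr_sumr.
rewrite exchange_big; apply: eq_bigr => s' _; rewrite mulr_suml.
by apply: eq_bigr => x _; rewrite ffunE mulrA.
Qed.

Lemma cellular_twisted_algebra :
  cellular R S smul sstar BL leB (BigM S mul Lam M) BC.
Proof.
apply: cellularI.
- by split; [exact: leBig_refl | exact: leBig_anti | exact: leBig_trans].
- exact: BC_free.
- exact: BC_spanning.
- split; [exact: sstarD | exact: sstarZ | exact: sstarK | exact: sstar_smul | exact: sstar_BC].
- exact: BC_mul_axiom.
Qed.

End Algebra.
End Structure.

Theorem corollary7
  (S : finType) (mul : S -> S -> S) (star : S -> S)
  (R : comPzRingType) (alpha : S -> S -> R)
  (one : {set S} -> S)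
  (Lam : {set S} -> finType) (leLam : forall D, rel (Lam D))
  (M : forall D, Lam D -> finType)
  (c : forall D (l : Lam D), M D l -> M D l -> {ffun GT S mul one D -> R})
  (u : {set S} -> S)
  (mulA : forall x y z, mul x (mul y z) = mul (mul x y) z)
  (starK : forall x, star (star x) = x)
  (starM : forall x y, star (mul x y) = mul (star y) (star x))
  (alpha_tw : forall x y z,
     alpha x y * alpha (mul x y) z = alpha x (mul y z) * alpha y z)
  (alpha_star : forall x y, alpha x y = alpha (star y) (star x))
  (one_in : forall D, D \in Dclasses mul -> one D \in D)
  (one_idem : forall D, D \in Dclasses mul -> mul (one D) (one D) = one D)
  (one_star : forall D, D \in Dclasses mul -> star (one D) = one D)
  (alpha_R : forall x y z, Rg mul y z -> alpha x y = alpha x z)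
  (cellG : forall D, D \in Dclasses mul ->
     cellular R (GT S mul one D) (gmul S mul one R D) (gstar S mul star one R D)
       (Lam D) (leLam D) (M D) (c D))
  (u_in : forall D L, D \in Dclasses mul -> L \in Lclasses_in mul D -> u L \in L)
  (u_R : forall D L, D \in Dclasses mul -> L \in Lclasses_in mul D ->
     Rg mul (u L) (one D)) :
  cellular R S (smul S mul R alpha) (sstar S star R)
    (BigLam S mul Lam) (leBig S mul Lam leLam) (BigM S mul Lam M)
    (BigC S mul star one R Lam M c u).
Proof. exact: cellular_twisted_algebra. Qed.
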